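(* Let $V$ be a simple Yetter-Drinfeld module over $H=B(n,w,\gamma)$ with $\dim_\Bbbk V=p+1$ for some $p\ge0$. For any standard element $v\in V$, the set $\{v,y\cdot v,\dots,y^p\cdot v\}$ is a basis of $V$.
   Context: $\Bbbk$ is an algebraically closed field of characteristic $0$; $n,w$ positive integers, $\gamma$ a primitive $n$-th root of unity. $H=B(n,w,\gamma)$ is the Hopf algebra generated by $x^{\pm1},g,y$ with relations $xx^{-1}=x^{-1}x=1$, $xg=gx$, $xy=yx$, $yg=\gamma gy$, $y^n=1-x^w=1-g^n$, with $\Delta(x)=x\otimes x$, $\Delta(g)=g\otimes g$, $\Delta(y)=y\otimes g+1\otimes y$, $\varepsilon(x)=\varepsilon(g)=1$, $\varepsilon(y)=0$, $S(x)=x^{-1}$, $S(g)=g^{-1}$, $S(y)=-yg^{-1}$; $G(H)=\{g^jx^k\}$. A (left-left) Yetter-Drinfeld module is a left $H$-module, left $H$-comodule $(V,\cdot,\delta)$ with $\delta(h\cdot v)=h_{(1)}v_{(-1)}S(h_{(3)})\otimes h_{(2)}\cdot v_{(0)}$; simple means no nonzero proper Yetter-Drinfeld submodules. A nonzero $v\in V$ is a standard element of type $(\alpha,\beta,h)$ if $h\in G(H)$, $\alpha,\beta\in\Bbbk^*$, $x\cdot v=\alpha v$, $g\cdot v=\beta v$, $\delta(v)=h\otimes v$. *)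

(* Concrete model of the Hopf algebra B(n,w,gamma) via its
   PBW-type basis y^i g^j x^k (0 <= i,j < n, k : int) and of
   Yetter-Drinfeld modules over it, on V = K^d (column vectors). *)
From HB Require Import structures.
From mathcomp Require Import all_boot all_order all_algebra.
Set Implicit Arguments. Unset Strict Implicit. Unset Printing Implicit Defensive.
Import Order.TTheory GRing.Theory Num.Theory.
Local Open Scope ring_scope.

Section Bnwg.
Variables (K : fieldType) (n w : nat) (gam : K).

(* basis index (i,j,k) stands for the monomial y^i g^j x^k, with i,j < n
   (n is assumed positive, so 'I_(n.-1.+1) = 'I_n). *)
Definition Bidx := ('I_(n.-1.+1) * 'I_(n.-1.+1) * int)%type.

Definition mkB (i j : nat) (k : int) : Bidx := (inord i, inord j, k).

Definition Hel := seq (K * Bidx).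
Definition HHel := seq (K * (Bidx * Bidx)).

(* normal form of y^s g^t x^u for s, t < 2n, using g^n = x^w, y^n = 1 - x^w *)
Definition monoH (s t : nat) (u : int) : Hel :=
  let tu := if (t < n)%N then (t, u) else ((t - n)%N, u + (w%:Z)) in
  if (s < n)%N then [:: (1, mkB s tu.1 tu.2)]
  else [:: (1, mkB (s - n) tu.1 tu.2); (-1, mkB (s - n) tu.1 (tu.2 + w%:Z))].

(* product of basis elements: (y^a g^b x^c)(y^d g^e x^f)
   = gam^(-bd) y^(a+d) g^(b+e) x^(c+f)   (since y g = gam g y) *)
Definition mulB (b b' : Bidx) : Hel :=
  [seq (gam ^- (b.1.2 * b'.1.1)%N * q.1, q.2)
  | q <- monoH (b.1.1 + b'.1.1) (b.1.2 + b'.1.2) (b.2 + b'.2)].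

Definition mulH (p q : Hel) : Hel :=
  flatten [seq [seq (a.1 * c.1 * e.1, e.2) | e <- mulB a.2 c.2] | a <- p, c <- q].

Definition mulHH (p q : HHel) : HHel :=
  flatten [seq flatten [seq [seq (a.1 * c.1 * e1.1 * e2.1, (e1.2, e2.2))
                            | e2 <- mulB a.2.2 c.2.2] | e1 <- mulB a.2.1 c.2.1]
          | a <- p, c <- q].

Definition tensH (p q : Hel) : HHel := [seq (a.1 * c.1, (a.2, c.2)) | a <- p, c <- q].

Definition oneH : Hel := [:: (1, mkB 0 0 0)].
Definition xH : Hel := monoH 0 0 1.
Definition gH : Hel := monoH 0 1 0.
Definition yH : Hel := monoH 1 0 0.

(* comultiplication: Delta(y) = y (x) g + 1 (x) y, g^j x^k grouplike,
   extended multiplicatively *)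
Definition DeltaY : HHel := tensH yH gH ++ tensH oneH yH.
Definition DeltaB (b : Bidx) : HHel :=
  iter b.1.1 (mulHH DeltaY) [:: (1, (mkB 0 b.1.2 b.2, mkB 0 b.1.2 b.2))].

(* (Delta (x) id) Delta, as formal sums in H (x) H (x) H *)
Definition Delta2B (b : Bidx) : seq (K * (Bidx * Bidx * Bidx)) :=
  flatten [seq [seq (c.1 * c'.1, (c'.2.1, c'.2.2, c.2.2)) | c' <- DeltaB c.2.1]
          | c <- DeltaB b].

Definition epsB (b : Bidx) : K := if (b.1.1 == 0 :> nat) then 1 else 0.

(* antipode: S(x) = x^-1, S(g) = g^-1 = g^(n-1) x^(-w), S(y) = - y g^-1,
   S(y^i g^j x^k) = x^-k g^-j S(y)^i *)
Definition SyH : Hel := [seq (- a.1, a.2) | a <- mulH yH [:: (1, mkB 0 (n - 1) (- (w%:Z)))]].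
Definition SB (b : Bidx) : Hel :=
  iter b.1.1 (fun t => mulH t SyH)
    [:: (1, if (b.1.2 == 0 :> nat) then mkB 0 0 (- b.2)
            else mkB 0 (n - b.1.2) (- b.2 - w%:Z))].

Definition coefT (I : eqType) (M : nmodType) (t : seq (I * M)) (b : I) : M :=
  \sum_(e <- t | e.1 == b) e.2.

Variable d : nat.
Notation V := 'cV[K]_d.

Definition actH (A : Bidx -> 'M[K]_d) (h : Hel) (v : V) : V :=
  \sum_(e <- h) e.1 *: (A e.2 *m v).

Definition is_Hmodule (A : Bidx -> 'M[K]_d) : Prop :=
  A (mkB 0 0 0) = (1%:M : 'M[K]_d) /\
  forall b b', A b *m A b' = \sum_(e <- mulB b b') e.1 *: A e.2.

(* a coaction V -> H (x) V, an element of H (x) V being a formal sum *)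
Definition Coact := V -> seq (Bidx * V).

Definition coact_linear (delta : Coact) : Prop :=
  forall (a : K) (u v : V) (b : Bidx),
    coefT (delta (a *: u + v)) b = a *: coefT (delta u) b + coefT (delta v) b.

Definition DeltaId (t : seq (Bidx * V)) : seq ((Bidx * Bidx) * V) :=
  flatten [seq [seq (c.2, c.1 *: e.2) | c <- DeltaB e.1] | e <- t].

Definition IdDelta (delta : Coact) (t : seq (Bidx * V)) : seq ((Bidx * Bidx) * V) :=
  flatten [seq [seq ((e.1, e'.1), e'.2) | e' <- delta e.2] | e <- t].

Definition is_Hcomodule (delta : Coact) : Prop :=
  [/\ coact_linear delta,
      (forall v bb, coefT (DeltaId (delta v)) bb = coefT (IdDelta delta (delta v)) bb)
    & (forall v, \sum_(e <- delta v) epsB e.1 *: e.2 = v)].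

(* h_(1) v_(-1) S(h_(3)) (x) h_(2) . v_(0) *)
Definition YDrhs (A : Bidx -> 'M[K]_d) (delta : Coact) (h : Bidx) (v : V)
    : seq (Bidx * V) :=
  flatten [seq flatten [seq
     [seq (q.2, (c.1 * q.1) *: (A c.2.1.2 *m e.2))
     | q <- mulH (mulH [:: (1, c.2.1.1)] [:: (1, e.1)]) (SB c.2.2)]
     | e <- delta v] | c <- Delta2B h].

Definition is_YD (A : Bidx -> 'M[K]_d) (delta : Coact) : Prop :=
  [/\ is_Hmodule A, is_Hcomodule delta &
      forall (h : Bidx) (v : V) (b : Bidx),
        coefT (delta (A h *m v)) b = coefT (YDrhs A delta h v) b].

Definition is_YDsub (A : Bidx -> 'M[K]_d) (delta : Coact) (U : {vspace V}) : Prop :=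
  (forall (b : Bidx) (u : V), u \in U -> A b *m u \in U) /\
  (forall (u : V) (b : Bidx), u \in U -> coefT (delta u) b \in U).

Definition is_simple_YD (A : Bidx -> 'M[K]_d) (delta : Coact) : Prop :=
  [/\ is_YD A delta, (0 < d)%N &
      forall U : {vspace V}, is_YDsub A delta U -> U = 0%VS \/ U = fullv].

(* standard element of type (alpha, beta, h), h = g^j x^k in G(H) *)
Definition is_standard (A : Bidx -> 'M[K]_d) (delta : Coact) (v : V)
    (alpha beta : K) (h : Bidx) : Prop :=
  [/\ v != 0, alpha != 0 & beta != 0] /\
  [/\ h.1.1 = 0%N :> nat,
      actH A xH v = alpha *: v, actH A gH v = beta *: v &
      forall b, coefT (delta v) b = coefT [:: (h, v)] b].

End Bnwg.

From HB Require Import structures.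
From mathcomp Require Import all_boot all_order all_algebra.
From mathcomp Require Import zify.
Set Implicit Arguments. Unset Strict Implicit. Unset Printing Implicit Defensive.
Import GRing.Theory.
Local Open Scope ring_scope.

(* Let Y be the matrix of y and S the span of v, Y v, ..., Y^p v.  By
   Cayley-Hamilton S contains every Y^m v.  Every basis element of H acts as
   Y^i g^j x^k, the group-likes g^j x^k q-commute with y and have v as a common
   eigenvector, so S is an H-submodule.  The coaction sends v to h (x) v, and
   the Yetter-Drinfeld condition writes the components of the coaction on a.u
   as combinations of H acting on those of the coaction on u, so S is also a
   subcomodule.  By simplicity S = V, and p + 1 spanning vectors of a
   (p+1)-dimensional space form a basis. *)

Section Krylov.
Variables (K : fieldType) (d : nat).

Lemma span_mulmx_stable (M : 'M[K]_d) (s : seq 'cV[K]_d) :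
  {in s, forall x, M *m x \in <<s>>%VS} ->
  {in <<s>>%VS, forall u, M *m u \in <<s>>%VS}.
Proof.
move=> Ms u /(coord_span (X := in_tuple s)) ->; rewrite mulmx_sumr.
apply: rpred_sum => i _; rewrite -scalemxAr; apply/rpredZ/Ms/mem_nth.
exact: ltn_ord.
Qed.

Definition krylov (Y : 'M[K]_d) (v : 'cV[K]_d) := mkseq (fun i => Y ^+ i *m v).

End Krylov.

Lemma Cayley_Hamilton_expr (K : fieldType) (p : nat) (Y : 'M[K]_p.+1) :
  Y ^+ p.+1 = - \sum_(i < p.+1) (char_poly Y)`_i *: Y ^+ i.
Proof.
have hornerZX (c : K) i : horner_mx Y (c *: 'X^i) = c *: Y ^+ i.
  by rewrite linearZ /= rmorphXn /= horner_mx_X.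
have CH := Cayley_Hamilton Y.
rewrite -[in LHS](coefK (char_poly Y)) poly_def size_char_poly linear_sum in CH.
move: CH; rewrite big_ord_recr /= addrC => /eqP; rewrite addr_eq0 => /eqP.
have lead1 : (char_poly Y)`_p.+1 = 1.
  by have := monicP (char_poly_monic Y); rewrite lead_coefE size_char_poly.
rewrite hornerZX lead1 scale1r => ->; congr (- _).
by apply: eq_bigr => i _; apply: hornerZX.
Qed.

Lemma mxpow_in_krylov (K : fieldType) (p : nat) (Y : 'M[K]_p.+1) v m :
  Y ^+ m *m v \in <<krylov Y v p.+1>>%VS.
Proof.
have gen i : (i < p.+1)%N -> Y ^+ i *m v \in <<krylov Y v p.+1>>%VS.
  by move=> ip; apply/memv_span/mapP; exists i; rewrite ?mem_iota.
have Y_stable : {in krylov Y v p.+1, forall x, Y *m x \in <<krylov Y v p.+1>>%VS}.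
  move=> x /mapP[i]; rewrite mem_iota => /andP[_ ip] ->.
  rewrite mulmxA mulmxE -exprS; case: (ltnP i.+1 p.+1) => [|pi]; first exact: gen.
  have -> : i.+1 = p.+1 by lia.
  rewrite Cayley_Hamilton_expr mulNmx mulmx_suml rpredN; apply: rpred_sum => j _.
  by rewrite -scalemxAl rpredZ ?gen.
elim: m => [|m IH]; first exact: gen.
by rewrite exprS -mulmxE -mulmxA; apply: span_mulmx_stable.
Qed.

Section Coaction.
Variables (K : fieldType) (n w : nat) (gam : K) (d : nat).
Variables (A : Bidx n -> 'M[K]_d) (delta : Coact K n d).

Definition coact_in (X : {vspace 'cV[K]_d}) (u : 'cV[K]_d) :=
  forall b, coefT (delta u) b \in X.

Lemma coefT_regroup (I : eqType) (t : seq (I * 'cV[K]_d)) (F : I -> K) (M : 'M[K]_d) :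
  \sum_(e <- t) F e.1 *: (M *m e.2) =
  \sum_(i <- undup (map fst t)) F i *: (M *m coefT t i).
Proof.
rewrite /coefT.
under [RHS]eq_bigr => i _ do rewrite mulmx_sumr scaler_sumr big_mkcond.
rewrite exchange_big /=; apply: eq_big_seq => e et.
have ein : e.1 \in undup (map fst t) by rewrite mem_undup; apply: map_f.
rewrite (bigD1_seq e.1) ?undup_uniq //= eqxx big1 ?addr0 // => i /negPf hi.
by rewrite eq_sym hi.
Qed.

Variable X : {vspace 'cV[K]_d}.
Hypothesis A_stable : forall b u, u \in X -> A b *m u \in X.

Lemma coefT_YDrhs_in h u b : coact_in X u -> coefT (YDrhs w gam A delta h u) b \in X.
Proof.
move=> Xu; rewrite /coefT /YDrhs big_flatten /= big_map; apply: rpred_sum => c _.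
rewrite big_flatten big_map.
under eq_bigr => e _ do rewrite big_map -scaler_suml.
pose F i := \sum_(q <- mulH w gam (mulH w gam [:: (1, c.2.1.1)] [:: (1, i)])
                          (SB w gam c.2.2) | q.2 == b) c.1 * q.1.
rewrite (coefT_regroup _ F); apply: rpred_sum => i _.
exact/rpredZ/A_stable.
Qed.

Hypothesis hYD : is_YD w gam A delta.

Lemma coact_inZD a u v : coact_in X u -> coact_in X v -> coact_in X (a *: u + v).
Proof.
case: hYD => _ [lin _ _] _ Xu Xv b.
by rewrite lin rpredD ?rpredZ.
Qed.

Lemma coact_in0 : coact_in X 0.
Proof.
case: hYD => _ [lin _ _] _ b.
have := lin 1 0 0 b; rewrite scaler0 !addr0 scale1r.
by rewrite -{1}[coefT _ b]addr0 => /addrI <-; rewrite rpred0.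
Qed.

Lemma coact_inD u v : coact_in X u -> coact_in X v -> coact_in X (u + v).
Proof. by rewrite -{2}[u]scale1r; apply: coact_inZD. Qed.

Lemma coact_inZ a u : coact_in X u -> coact_in X (a *: u).
Proof. by move=> Xu; rewrite -[_ *: _]addr0; apply: coact_inZD Xu coact_in0. Qed.

Lemma coact_in_A b u : coact_in X u -> coact_in X (A b *m u).
Proof. by case: hYD => _ _ YD Xu b'; rewrite YD; apply: coefT_YDrhs_in. Qed.

Lemma coact_in_actH hh u : coact_in X u -> coact_in X (actH A hh u).
Proof.
move=> Xu; apply: big_ind => [|x y|e _]; [exact: coact_in0|exact: coact_inD|].
exact/coact_inZ/coact_in_A.
Qed.

Lemma coact_in_span (s : seq 'cV[K]_d) :
  {in s, forall x, coact_in X x} -> {in <<s>>%VS, forall u, coact_in X u}.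
Proof.
move=> Xs u /(coord_span (X := in_tuple s)) ->.
apply: big_ind => [|x y|i _]; [exact: coact_in0|exact: coact_inD|].
exact/coact_inZ/Xs/mem_nth.
Qed.

End Coaction.

Lemma mx_int_eigen (K : fieldType) (d : nat) (F : int -> 'M[K]_d) (u : 'cV[K]_d)
    (a : K) :
  F 0 = 1%:M -> (forall k l, F (k + l) = F k *m F l) ->
  F 1 *m u = a *: u -> a != 0 -> forall k, F k *m u = a ^ k *: u.
Proof.
move=> F0 FD F1 a_neq0.
have Fnat m : F m%:Z *m u = a ^+ m *: u.
  elim: m => [|m IH]; first by rewrite F0 mul1mx scale1r.
  by rewrite intS FD -mulmxA IH -scalemxAr F1 scalerA -exprSr.
case=> m //; apply: (canRL (scalerK (expf_neq0 m.+1 a_neq0))).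
by rewrite scalemxAr -Fnat mulmxA -FD NegzE addNr F0 mul1mx.
Qed.

Section Module.
Variables (K : fieldType) (n w : nat) (gam : K) (d : nat).
Hypothesis hn : (0 < n)%N.
Variable A : Bidx n -> 'M[K]_d.

Definition actmx (h : Hel K n) : 'M[K]_d := \sum_(e <- h) e.1 *: A e.2.

Lemma actH_actmx h u : actH A h u = actmx h *m u.
Proof.
by rewrite /actH /actmx mulmx_suml; apply: eq_bigr => e _; rewrite scalemxAl.
Qed.

Lemma iter_actH h u i : iter i (actH A h) u = actmx h ^+ i *m u.
Proof.
elim: i => [|i IH] /=; first by rewrite expr0 mul1mx.
by rewrite IH actH_actmx mulmxA mulmxE -exprS.
Qed.

Lemma val_inord_lt i : (i < n)%N -> ((inord i : 'I_(n.-1.+1)) : nat) = i.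
Proof. by move=> lt_i_n; rewrite inordK // prednK. Qed.

Lemma ltn_Bidx (i : 'I_(n.-1.+1)) : (i < n)%N.
Proof. by have := ltn_ord i; lia. Qed.

Lemma mkB_val (b : Bidx n) : mkB n b.1.1 b.1.2 b.2 = b.
Proof. by case: b => [[i j] k]; rewrite /mkB /= !inord_val. Qed.

Lemma Bidx_le1 (b : Bidx n) : (n <= 1)%N -> b = mkB n 0 0 b.2.
Proof.
move=> n_le1; rewrite -[b in LHS]mkB_val; congr mkB.
- by have := ltn_ord b.1.1; lia.
- by have := ltn_ord b.1.2; lia.
Qed.

Lemma actmx_monoH s t k : (s < n)%N -> (t < n)%N ->
  actmx (monoH K n w s t k) = A (mkB n s t k).
Proof. by move=> lt_s lt_t; rewrite /actmx /monoH lt_s lt_t big_seq1 scale1r. Qed.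

Hypothesis hA : is_Hmodule w gam A.

Lemma A_mkB_mul i j k i' j' k' : (i + i' < n)%N -> (j + j' < n)%N ->
  A (mkB n i j k) *m A (mkB n i' j' k') =
  gam ^- (j * i') *: A (mkB n (i + i') (j + j') (k + k')).
Proof.
move=> lt_i lt_j; rewrite hA.2 /mulB /monoH /= !val_inord_lt; try lia.
by rewrite lt_i lt_j big_seq1 /= mulr1.
Qed.

Let Y := actmx (yH K n w).

Lemma A_pbw i j k : (i < n)%N -> (j < n)%N ->
  A (mkB n i j k) = Y ^+ i *m A (mkB n 0 j k).
Proof.
elim: i => [|i IH] lt_i lt_j; first by rewrite expr0 mul1mx.
rewrite exprS -mulmxE -mulmxA -IH; [|lia|done].
rewrite /Y actmx_monoH; try lia.
by rewrite A_mkB_mul; try lia; rewrite mul0n expr0 invr1 scale1r add1n add0n add0r.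
Qed.

Lemma gx_qcomm_y j k : (j < n)%N ->
  A (mkB n 0 j k) *m Y = gam ^- j *: (Y *m A (mkB n 0 j k)).
Proof.
case: (ltnP 1 n) => [n_gt1|n_le1] lt_j.
  rewrite /Y actmx_monoH // !A_mkB_mul; try lia.
  by rewrite muln1 mul0n expr0 invr1 scale1r addn0 add0n addr0 add0r.
have -> : j = 0%N by lia.
rewrite expr0 invr1 scale1r /Y /actmx mulmx_sumr mulmx_suml.
apply: eq_bigr => e _; rewrite -scalemxAr -scalemxAl (Bidx_le1 e.2) //.
by rewrite !A_mkB_mul // addrC.
Qed.

Lemma gx_qcomm_ypow j k m (u : 'cV[K]_d) : (j < n)%N ->
  A (mkB n 0 j k) *m (Y ^+ m *m u) =
  (gam ^- j) ^+ m *: (Y ^+ m *m (A (mkB n 0 j k) *m u)).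
Proof.
move=> lt_j; elim: m u => [|m IH] u; first by rewrite !expr0 !mul1mx scale1r.
rewrite exprSr -mulmxE -mulmxA IH (mulmxA (A _) Y) gx_qcomm_y // -scalemxAl -mulmxA.
by rewrite -!scalemxAr scalerA -exprSr !mulmxA mulmxE -exprSr.
Qed.

Lemma gx_eigen (v : 'cV[K]_d) alpha beta :
  actH A (xH K n w) v = alpha *: v -> alpha != 0 -> actH A (gH K n w) v = beta *: v ->
  forall j k, (j < n)%N -> A (mkB n 0 j k) *m v = (beta ^+ j * alpha ^ k) *: v.
Proof.
move=> hx alpha_neq0 hg.
have x_eigen : forall k, A (mkB n 0 0 k) *m v = alpha ^ k *: v.
  apply: (mx_int_eigen (F := fun k => A (mkB n 0 0 k))) alpha_neq0 => [|k l|].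
  - exact: hA.1.
  - by rewrite A_mkB_mul // mul0n expr0 invr1 scale1r.
  - by rewrite -hx actH_actmx actmx_monoH.
have g_eigen j : (j < n)%N -> A (mkB n 0 j 0) *m v = beta ^+ j *: v.
  elim: j => [|j IH] lt_j; first by rewrite hA.1 mul1mx scale1r.
  have <- : A (mkB n 0 1 0) *m A (mkB n 0 j 0) = A (mkB n 0 j.+1 0).
    by rewrite A_mkB_mul // muln0 expr0 invr1 scale1r.
  have g1 : A (mkB n 0 1 0) *m v = beta *: v.
    by rewrite -hg actH_actmx actmx_monoH //; lia.
  by rewrite -mulmxA IH ?(ltnW lt_j) // -scalemxAr g1 scalerA -exprSr.
move=> j k lt_j.
have -> : A (mkB n 0 j k) = A (mkB n 0 j 0) *m A (mkB n 0 0 k).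
  by rewrite A_mkB_mul ?addn0 // muln0 expr0 invr1 scale1r add0r.
by rewrite -mulmxA x_eigen -scalemxAr g_eigen // scalerA mulrC.
Qed.

Lemma A_Ypow_multiple (v : 'cV[K]_d) (c : nat -> int -> K) :
  (forall j k, (j < n)%N -> A (mkB n 0 j k) *m v = c j k *: v) ->
  forall b m, exists a, A b *m (Y ^+ m *m v) = a *: (Y ^+ (b.1.1 + m) *m v).
Proof.
move=> v_eigen b m.
rewrite -{1}[b]mkB_val A_pbw ?ltn_Bidx // -mulmxA gx_qcomm_ypow ?ltn_Bidx //.
rewrite v_eigen ?ltn_Bidx //; exists ((gam ^- b.1.2) ^+ m * c b.1.2 b.2).
by rewrite -!scalemxAr scalerA mulmxA mulmxE -exprD.
Qed.
End Module.

Theorem lemma3p5 (K : closedFieldType) (n w : nat) (gam : K) (p : nat)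
  (hn : (0 < n)%N) (hw : (0 < w)%N) (hK : [pchar K] =i pred0)
  (hgam : n.-primitive_root gam)
  (A : Bidx n -> 'M[K]_p.+1) (delta : Coact K n p.+1)
  (hV : @is_simple_YD K n w gam p.+1 A delta)
  (v : 'cV[K]_p.+1) (alpha beta : K) (h : Bidx n)
  (hv : @is_standard K n w p.+1 A delta v alpha beta h) :
  basis_of fullv [seq iter i (actH A (yH K n w)) v | i <- iota 0 p.+1].
Proof.
have [[hYD _ simple] [[v_neq0 alpha_neq0 _] [_ hx hg coact_v]]] := (hV, hv).
have hA : is_Hmodule w gam A by case: hYD.
pose Y := actmx A (yH K n w).
pose S := <<krylov Y v p.+1>>%VS.
have -> : [seq iter i (actH A (yH K n w)) v | i <- iota 0 p.+1] = krylov Y v p.+1.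
  by apply: eq_map => i; rewrite iter_actH.
have A_stable b u : u \in S -> A b *m u \in S.
  apply: span_mulmx_stable => _ /mapP[m _ ->].
  have [a ->] := A_Ypow_multiple hn hA (gx_eigen hn hA hx alpha_neq0 hg) b m.
  by rewrite rpredZ ?mxpow_in_krylov.
have v_in_S : v \in S by have := mxpow_in_krylov Y v 0; rewrite expr0 mul1mx.
have coact_S : {in S, forall u, coact_in delta S u}.
  apply: (coact_in_span hYD) => _ /mapP[m _ ->]; rewrite -iter_actH.
  elim: m => [|m IH] /=; last exact: (coact_in_actH A_stable hYD).
  move=> b; rewrite coact_v /coefT big_cons big_nil /=.
  by case: (h == b); rewrite ?addr0 ?rpred0.
have [S0|S_full] := simple S (conj A_stable (fun u b Su => coact_S u Su b)).
  by move: v_in_S; rewrite S0 memv0 (negPf v_neq0).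
by rewrite basisEdim -/S S_full subvv size_mkseq dimvf /= dim_matrix mulr1.
Qed.
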